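(* Let $T$ be a tree with $n$ vertices and matching number $\beta$. Then $$S_{k}(A(T))\leq \begin{cases} \sqrt{k(n-1)}, & \text{if } 1\leq k \leq \beta;\\ \sqrt{\beta (n-1)}, & \text{if } \beta< k \leq n-\beta;\\ \sqrt{(n-k)(n-1)}, & \text{if } n-\beta< k \leq n. \end{cases}$$
   Context: $A(T)$ is the adjacency matrix of $T$. For a real symmetric matrix $M$ with eigenvalues $\lambda_1(M)\geq\cdots\geq\lambda_n(M)$, $S_k(M)=\sum_{i=1}^k\lambda_i(M)$. The matching number is the maximum size of a matching. *)

From mathcomp Require Import all_boot all_order all_algebra.
From mathcomp Require Import reals.
Set Implicit Arguments. Unset Strict Implicit. Unset Printing Implicit Defensive.
Import Order.TTheory GRing.Theory Num.Theory.
Local Open Scope ring_scope.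

Definition simple_graph (n : nat) (e : rel 'I_n) : Prop :=
  symmetric e /\ irreflexive e.

Definition has_cycle (n : nat) (e : rel 'I_n) : Prop :=
  exists c : seq 'I_n, [/\ (3 <= size c)%N, uniq c & cycle e c].

Definition connected_graph (n : nat) (e : rel 'I_n) : Prop :=
  forall x y : 'I_n, connect e x y.

Definition is_tree (n : nat) (e : rel 'I_n) : Prop :=
  [/\ (0 < n)%N, simple_graph e, connected_graph e & ~ has_cycle e].

Definition is_matching (n : nat) (e : rel 'I_n) (M : {set 'I_n * 'I_n}) : bool :=
  [forall p in M, (p.1 < p.2)%N && e p.1 p.2] &&
  [forall p in M, forall q in M,
     (p != q) ==> [&& p.1 != q.1, p.1 != q.2, p.2 != q.1 & p.2 != q.2]].

Definition matching_number (n : nat) (e : rel 'I_n) : nat :=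
  \max_(M : {set 'I_n * 'I_n} | is_matching e M) #|M|.

Definition adj_mx (R : nzRingType) (n : nat) (e : rel 'I_n) : 'M[R]_n :=
  \matrix_(i, j) (e i j)%:R.

Definition eigenvalues_desc (R : realType) (n : nat) (A : 'M[R]_n) (s : seq R) : Prop :=
  sorted (fun x y : R => y <= x) s /\
  char_poly A = \prod_(x <- s) ('X - x%:P).

Definition Ssum (R : realType) (s : seq R) (k : nat) : R :=
  \sum_(i < k) s`_i.

(* In the Leibniz expansion of det (x I - A), a permutation s contributes only
   if every vertex it moves is sent to a neighbour. In a forest such an s is an
   involution, since a longer cycle of s would be a cycle of the graph, and its
   transpositions form a matching; so its term is c x^(n - 2j) with j <= beta.
   Hence the spectrum is symmetric about 0 and has at most 2 beta nonzero
   eigenvalues, so at most beta positive ones; moreover the squares of the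
   eigenvalues add up to tr A^2 = 2 (n - 1), the positive and the negative ones
   contributing n - 1 each. A sum of k eigenvalues is at most the sum of its
   positive terms, which by Cauchy-Schwarz is at most sqrt (min(k, beta) (n - 1));
   since all eigenvalues add up to 0, it is also minus the sum of the other
   n - k, which is at most sqrt ((n - k) (n - 1)). *)

From mathcomp Require Import all_boot all_order all_algebra.
From mathcomp Require Import perm reals.
From mathcomp Require Import zify ring lra.
Set Implicit Arguments. Unset Strict Implicit. Unset Printing Implicit Defensive.
Import Order.TTheory GRing.Theory Num.Theory.

Lemma card_in_pred_sum (T : finType) (A : {set T}) (P : pred T) :
  #|[set u in A | P u]| = \sum_(u in A) P u.
Proof.
rewrite -sum1_card (eq_bigl (fun u => (u \in A) && P u)) => [|u]; last by rewrite inE.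
by rewrite big_mkcondr; apply: eq_bigr => u _; case: (P u).
Qed.

Lemma card_moved_involutive n (s : 'S_n) : involutive s ->
  #|[set i | s i != i]| = #|[set i : 'I_n | i < s i]|.*2.
Proof.
move=> s_inv; set L := [set i : 'I_n | i < s i].
have mem_sL i : (i \in s @: L) = (s i < i).
  apply/imsetP/idP => [[j jL ->] | lt_si_i].
    by rewrite (s_inv j); rewrite inE in jL.
  by exists (s i); rewrite ?inE s_inv.
have -> : [set i | s i != i] = L :|: s @: L.
  by apply/setP => i; rewrite !inE mem_sL neq_ltn orbC.
rewrite cardsU card_imset; last exact: perm_inj.
suff -> : L :&: s @: L = set0 by rewrite cards0 subn0 addnn.
by apply/setP => i; rewrite !inE mem_sL; case: ltngtP.
Qed.

Section AcyclicGraph.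

Variables (n : nat) (e : rel 'I_n).
Hypotheses (e_sym : symmetric e) (e_irr : irreflexive e) (acyclic : ~ has_cycle e).

Lemma acyclic_path_chord x p y :
  path e x p -> uniq (x :: p) -> e x y -> y \in p -> y = head x p.
Proof.
move=> e_xp uniq_xp exy yp; case/splitPr: yp e_xp uniq_xp => p1 p2.
case: p1 => [|a p1] e_xp uniq_xp; first by [].
exfalso; apply: acyclic; exists (x :: a :: rcons p1 y); split.
- by rewrite /= size_rcons.
- by move: uniq_xp; rewrite -cat_rcons -cat_cons cat_uniq => /andP[].
- move: e_xp; rewrite -cat_rcons cat_path => /andP[e_xap1y _].
  by rewrite /cycle rcons_path e_xap1y /= last_rcons e_sym.
Qed.

Lemma acyclic_leaf (V : {set 'I_n}) :
  V != set0 -> exists2 v, v \in V & #|[set u in V | e v u]| <= 1.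
Proof.
move=> V_neq0.
have [v /andP[vV leaf_v] | no_leaf] :=
  pickP [pred v | (v \in V) && (#|[set u in V | e v u]| <= 1)]; first by exists v.
have branching v : v \in V -> 1 < #|[set u in V | e v u]|.
  by move=> vV; move: (no_leaf v); rewrite /= vV /= ltnNge => ->.
have long_path m : exists x p,
    [/\ path e x p, uniq (x :: p), all [in V] (x :: p) & size p = m].
  elim: m => [|m [x [p [e_xp uniq_xp V_xp size_p]]]].
    by case/set0Pn: V_neq0 => x xV; exists x, [::]; rewrite /= xV.
  have xV : x \in V by case/andP: V_xp.
  have /card_gt0P[y] : 0 < #|[set u in V | e x u] :\ head x p|.
    by move: (branching x xV); rewrite (cardsD1 (head x p)); case: (_ \in _) => // /ltnW.
  rewrite !inE => /andP[y_neq_h /andP[yV exy]].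
  have y_notin : y \notin x :: p.
    rewrite inE negb_or; apply/andP; split.
      by apply: contraTneq exy => ->; rewrite e_irr.
    by apply: contra y_neq_h => /(acyclic_path_chord e_xp uniq_xp exy) ->.
  exists y, (x :: p); split; last by rewrite /= size_p.
  - by rewrite /= e_sym exy.
  - by rewrite cons_uniq y_notin.
  - exact/andP.
have [x [p [_ uniq_xp V_xp size_p]]] := long_path #|V|.
suff : size (x :: p) <= #|V| by rewrite /= size_p ltnn.
rewrite -(card_uniqP uniq_xp); apply/subset_leq_card/subsetP => y.
exact: (allP V_xp).
Qed.

Lemma acyclic_degree_sum (V : {set 'I_n}) :
  V != set0 -> \sum_(v in V) #|[set u in V | e v u]| <= (#|V| - 1).*2.
Proof.
have [m] := ubnP #|V|; elim: m V => // m IH V lt_Vm V_neq0.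
have [v vV leaf_v] := acyclic_leaf V_neq0.
set W := V :\ v; set d := #|[set u in V | e v u]|.
have card_V : #|V| = #|W|.+1 by rewrite (cardsD1 v) vV.
have deg_W u : u \in W -> #|[set w in V | e u w]| = #|[set w in W | e u w]| + e u v.
  move=> uW; rewrite (cardsD1 v) inE vV /= addnC; congr (_ + _).
  by apply: eq_card => w; rewrite !inE andbA.
have back_edges : \sum_(u in W) e u v = d.
  rewrite -card_in_pred_sum; apply: eq_card => u; rewrite !inE e_sym.
  by case: eqP => [-> | _]; rewrite ?e_irr ?andbF.
have d_le_W : d <= #|W|.
  apply/subset_leq_card/subsetP => u; rewrite !inE => /andP[-> evu].
  by rewrite andbT; apply: contraTneq evu => ->; rewrite e_irr.
rewrite (bigD1 v) //= (eq_bigl [in W]) => [|u]; last by rewrite !inE andbC.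
rewrite (eq_bigr _ deg_W) big_split /= back_edges card_V -/d.
have [W0 | W_neq0] := eqVneq W set0.
  by move: d_le_W; rewrite W0 big_set0 cards0 leqn0 => /eqP ->.
have lt_Wm : #|W| < m by rewrite -ltnS -card_V.
move: (IH W lt_Wm W_neq0) leaf_v; rewrite -card_gt0 in W_neq0.
by set S := \sum_(u in W) _; rewrite -/d -!muln2; lia.
Qed.

Lemma acyclic_perm_involutive (s : 'S_n) :
  (forall i, s i != i -> e i (s i)) -> involutive s.
Proof.
move=> s_edges i; apply/eqP/negPn/negP => ssi_neq_i.
have si_neq_i : s i != i by apply: contraNneq ssi_neq_i => si_i; rewrite !si_i.
have orbit_moved x : x \in orbit s i -> s x != x.
  rewrite -fconnect_orbit fconnect_sym; last exact: perm_inj.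
  move=> /iter_findex iter_x_i; apply/eqP => sx_x.
  have iter_x k : iter k s x = x by elim: k => //= k ->.
  by move: si_neq_i; rewrite -iter_x_i iter_x sx_x eqxx.
apply: acyclic; exists (orbit s i); split; last 2 first.
- exact: orbit_uniq.
- apply: (@sub_in_cycle _ [in orbit s i] (frel s)); last 2 first.
  + exact/allP.
  + exact/cycle_orbit/perm_inj.
  by move=> x y x_orb _ /eqP <-; apply/s_edges/orbit_moved.
have uniq_iter : uniq [:: i; s i; s (s i)].
  rewrite /= !inE negb_or eq_sym si_neq_i eq_sym ssi_neq_i /= andbT.
  by apply: contra si_neq_i => /eqP/perm_inj/esym/eqP.
apply: (uniq_leq_size uniq_iter) => y; rewrite !inE => /or3P[] /eqP ->.
- exact: in_orbit.
- exact/mem_orbit/in_orbit.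
- exact/mem_orbit/mem_orbit/in_orbit.
Qed.

Lemma involutive_perm_matching (s : 'S_n) :
  (forall i, s i != i -> e i (s i)) -> involutive s ->
  #|[set i : 'I_n | i < s i]| <= matching_number e.
Proof.
move=> s_edges s_inv; set L := [set i : 'I_n | i < s i].
have crossing a b : a \in L -> b \in L -> a != s b.
  rewrite !inE => lt_a lt_b; apply/eqP => ab; move: lt_a; rewrite ab s_inv => lt_a.
  by have := ltn_trans lt_a lt_b; rewrite ltnn.
rewrite -(@card_imset _ _ (fun i => (i, s i))) => [|i j [] //].
apply: (@leq_bigmax_cond _ (fun M => is_matching e M) (fun M => #|M|)).
apply/andP; split.
  apply/forall_inP => _ /imsetP[i iL ->] /=; move: (iL); rewrite inE => lt_i.
  by rewrite lt_i s_edges // eq_sym neq_ltn lt_i.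
apply/forall_inP => _ /imsetP[i iL ->]; apply/forall_inP => _ /imsetP[j jL ->] /=.
apply/implyP => ij_neq; have i_neq_j : i != j by apply: contraNneq ij_neq => ->.
rewrite i_neq_j crossing // eq_sym crossing //=.
by apply: contra i_neq_j => /eqP/perm_inj ->.
Qed.

End AcyclicGraph.

Local Open Scope ring_scope.

Lemma prodrN_seq (R : comNzRingType) (I : Type) (r : seq I) (F : I -> R) :
  \prod_(i <- r) - F i = (-1) ^+ size r * \prod_(i <- r) F i.
Proof.
elim: r => [|i r IH]; first by rewrite !big_nil mulr1.
by rewrite !big_cons IH exprS mulrACA mulN1r.
Qed.

Lemma eq_poly_on_ge0 (R : numDomainType) (p q : {poly R}) :
  (forall t, 0 <= t -> p.[t] = q.[t]) -> p = q.
Proof.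
move=> pq_ge0; apply/eqP; rewrite -subr_eq0; apply/eqP.
apply: (@roots_geq_poly_eq0 _ _ [seq i%:R | i <- iota 0 (size (p - q))]).
- by apply/allP => _ /mapP[i _ ->]; rewrite /root !hornerE pq_ge0 ?subrr.
- by rewrite map_inj_uniq ?iota_uniq // => a b /eqP; rewrite eqr_nat => /eqP.
- by rewrite size_map size_iota.
Qed.

Lemma char_polyE (R : comNzRingType) n (A : 'M[R]_n) :
  char_poly A = \sum_(s : 'S_n) (-1) ^+ s * \prod_i char_poly_mx A i (s i).
Proof. by []. Qed.

Lemma horner_char_poly (R : comNzRingType) n (A : 'M[R]_n) t :
  (char_poly A).[t] = \det (t%:M - A).
Proof.
rewrite /char_poly -[_.[t]]/(horner_eval t _) -det_map_mx; congr (\det _).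
by apply/matrixP => i j; rewrite mxE /= !mxE /horner_eval /= !hornerE hornerMn hornerX.
Qed.

Lemma size_char_poly_roots (R : comNzRingType) n (A : 'M[R]_n) (s : seq R) :
  char_poly A = \prod_(x <- s) ('X - x%:P) -> size s = n.
Proof.
by move=> char_s; have := size_char_poly A; rewrite char_s size_prod_XsubC => -[].
Qed.

Lemma char_poly_sqr_mx (R : rcfType) n (A : 'M[R]_n) (s : seq R) :
  char_poly A = \prod_(x <- s) ('X - x%:P) ->
  char_poly (A *m A) = \prod_(x <- map (fun x => x ^+ 2) s) ('X - x%:P).
Proof.
move=> char_s; have size_s := size_char_poly_roots char_s.
apply: eq_poly_on_ge0 => t t_ge0; set u := Num.sqrt t.
have tu : t = u * u by rewrite -expr2 sqr_sqrtr.
have factor : t%:M - A *m A = (u%:M - A) *m (u%:M + A).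
  rewrite mulmxDr !mulmxBl -scalar_mxM -tu mul_scalar_mx mul_mx_scalar.
  by rewrite addrA subrK.
have shift : u%:M + A = (-1) *: ((- u)%:M - A).
  by rewrite scaleN1r opprB raddfN opprK addrC.
rewrite horner_char_poly factor shift det_mulmx detZ -!horner_char_poly char_s.
rewrite !horner_prod big_map -size_s -prodrN_seq -big_split /=; apply: eq_bigr => x _.
by rewrite !hornerXsubC tu; ring.
Qed.

Section SymmetricSeq.

Variables (R : realFieldType) (s : seq R).

Lemma count_neq0_split :
  count (fun x => x != 0) s = (count (fun x => 0 < x)%R s + count (fun x => x < 0)%R s)%N.
Proof. by elim: s => //= x r ->; case: ltgtP => _; rewrite /= ?add0n ?addSn ?addnS. Qed.

Lemma sum_sqr_split :
  \sum_(x <- s) x ^+ 2 = \sum_(x <- s | 0 < x) x ^+ 2 + \sum_(x <- s | x < 0) x ^+ 2.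
Proof.
elim: s => [|x r IH]; first by rewrite !big_nil addr0.
rewrite !big_cons IH; case: ltgtP => [_ | _ | <-]; last by rewrite expr0n add0r.
  by rewrite addrA.
by rewrite addrCA.
Qed.

Hypothesis s_sym : perm_eq s (map -%R s).

Lemma perm_eq_opp_sum0 : \sum_(x <- s) x = 0.
Proof.
have : \sum_(x <- s) x = - \sum_(x <- s) x.
  by rewrite [LHS](perm_big _ s_sym) big_map sumrN.
lra.
Qed.

Lemma perm_eq_opp_count :
  count (fun x => x < 0) s = count (fun x => 0 < x) s.
Proof.
by rewrite (seq.permP s_sym) count_map; apply: eq_count => x /=; rewrite oppr_lt0.
Qed.

Lemma perm_eq_opp_sum_sqr :
  \sum_(x <- s | x < 0) x ^+ 2 = \sum_(x <- s | 0 < x) x ^+ 2.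
Proof.
rewrite [RHS](perm_big _ s_sym) big_map.
by apply: eq_big => x; rewrite ?oppr_gt0 ?sqrrN.
Qed.

End SymmetricSeq.

Lemma sum_sqr_le_count (R : realFieldType) (I : Type) (r : seq I) (P : pred I)
    (f : I -> R) :
  (\sum_(i <- r | P i) f i) ^+ 2 <= (count P r)%:R * \sum_(i <- r | P i) f i ^+ 2.
Proof.
elim: r => [|x r IH]; first by rewrite !big_nil expr2 mulr0.
rewrite !big_cons /=; case: (P x) => //=; rewrite natrD.
set S := \sum_(i <- r | P i) f i; set Q := \sum_(i <- r | P i) f i ^+ 2.
have Q_ge0 : 0 <= Q by apply: sumr_ge0 => i _; apply: sqr_ge0.
have : 0 <= (count P r)%:R :> R by [].
move: (count P r)%:R IH => c IH; rewrite le_eqVlt => /predU1P[c0 | c_gt0].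
  rewrite -c0 mul0r in IH *.
  have -> : S = 0 by apply/eqP; rewrite -sqrf_eq0 eq_le sqr_ge0 andbT.
  by rewrite addr0 addr0 mul1r lerDl.
rewrite -subr_ge0 -(pmulr_rge0 _ c_gt0).
have -> : c * ((1 + c) * (f x ^+ 2 + Q) - (f x + S) ^+ 2) =
          (c * f x - S) ^+ 2 + (1 + c) * (c * Q - S ^+ 2) by ring.
by rewrite addr_ge0 ?sqr_ge0 // mulr_ge0 ?subr_ge0 // ltW // ltr_pwDr.
Qed.

Lemma sum_le_sqrt_count_sqr (R : rcfType) (r : seq R) :
  \sum_(x <- r) x <=
    Num.sqrt ((count (fun x => 0 < x) r)%:R * \sum_(x <- r | 0 < x) x ^+ 2).
Proof.
rewrite (bigID (fun x => 0 < x)) /=.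
have neg_le0 : \sum_(x <- r | ~~ (0 < x)) x <= 0 by apply: sumr_le0 => x; rewrite -leNgt.
apply: le_trans (lerD (lexx _) neg_le0) _; rewrite addr0.
apply: le_trans (ler_norm _) _; rewrite -sqrtr_sqr.
exact/ler_wsqrtr/sum_sqr_le_count.
Qed.

Section PartialSums.

Variables (R : realType) (s : seq R) (k : nat).
Hypothesis le_k_size : (k <= size s)%N.

Lemma Ssum_take : Ssum s k = \sum_(x <- take k s) x.
Proof.
rewrite /Ssum (big_nth 0) size_takel // big_mkord.
by apply: eq_bigr => i _; rewrite nth_take.
Qed.

Lemma Ssum_le_pos (c : nat) (N : R) :
  (count (fun x => 0 < x)%R s <= c)%N -> \sum_(x <- s | 0 < x) x ^+ 2 <= N ->
  Ssum s k <= Num.sqrt ((minn k c)%:R * N).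
Proof.
move=> count_le sqr_le; rewrite Ssum_take; apply: le_trans (sum_le_sqrt_count_sqr _) _.
rewrite -(cat_take_drop k s) big_cat /= in sqr_le.
rewrite -(cat_take_drop k s) count_cat in count_le.
apply/ler_wsqrtr/ler_pM => //; first by apply: sumr_ge0 => x _; apply: sqr_ge0.
  rewrite ler_nat leq_min (leq_trans (count_size _ _)) ?size_takel //=.
  exact: leq_trans (leq_addr _ _) count_le.
apply: le_trans sqr_le; rewrite lerDl; apply: sumr_ge0 => x _; exact: sqr_ge0.
Qed.

Lemma Ssum_le_neg (N : R) :
  \sum_(x <- s) x = 0 -> \sum_(x <- s | x < 0) x ^+ 2 <= N ->
  Ssum s k <= Num.sqrt ((size s - k)%:R * N).
Proof.
move=> sum0 sqr_le; rewrite Ssum_take.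
have -> : \sum_(x <- take k s) x = \sum_(x <- map -%R (drop k s)) x.
  by apply/eqP; rewrite big_map sumrN -addr_eq0 -big_cat cat_take_drop sum0.
apply: le_trans (sum_le_sqrt_count_sqr _) _.
rewrite -(cat_take_drop k s) big_cat /= in sqr_le.
apply/ler_wsqrtr/ler_pM => //; first by apply: sumr_ge0 => x _; apply: sqr_ge0.
  by rewrite ler_nat -size_drop -(size_map -%R); apply: count_size.
rewrite big_map (eq_big (fun x => x < 0) (fun x => x ^+ 2)) => [|x|x _]; last 2 first.
- by rewrite oppr_gt0.
- by rewrite sqrrN.
apply: le_trans sqr_le; rewrite lerDr; apply: sumr_ge0 => x _; exact: sqr_ge0.
Qed.

End PartialSums.

Section AdjacencyCharPoly.

Variables (n : nat) (e : rel 'I_n).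
Hypotheses (e_irr : irreflexive e) (acyclic : ~ has_cycle e).

Lemma adj_char_poly_term (R : comNzRingType) (s : 'S_n) :
  exists c : R, exists j, [/\ (j <= matching_number e)%N, (j.*2 <= n)%N &
    (-1) ^+ s * \prod_i char_poly_mx (adj_mx R e) i (s i) = c%:P * 'X^(n - j.*2)].
Proof.
have entry i k : char_poly_mx (adj_mx R e) i k = 'X *+ (i == k) - ((e i k)%:R)%:P.
  by rewrite !mxE.
have [i /andP[si_neq_i not_e] | s_edges] := pickP [pred i | (s i != i) && ~~ e i (s i)].
  exists 0, 0%N; split => //; rewrite (bigD1 i) //= entry (negbTE not_e).
  by rewrite eq_sym (negbTE si_neq_i) mulr0n sub0r oppr0 mul0r mulr0 mul0r.
have {}s_edges i : s i != i -> e i (s i).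
  by move=> si_neq_i; move: (s_edges i) => /=; rewrite si_neq_i => /negbFE.
have s_inv := acyclic_perm_involutive acyclic s_edges.
set j := #|[set i : 'I_n | (i < s i)%N]|.
have moved_j := card_moved_involutive s_inv; rewrite -/j in moved_j.
have le_jn : (j.*2 <= n)%N.
  by rewrite -moved_j; apply: leq_trans (max_card _) _; rewrite card_ord.
exists ((-1) ^+ s * (-1) ^+ j.*2), j; split => //; first exact: involutive_perm_matching.
rewrite (bigID (fun i => s i == i)) /=.
rewrite (eq_bigr (fun _ => 'X)) => [|i /eqP si_i]; last first.
  by rewrite entry si_i eqxx e_irr /= mulr1n subr0.
rewrite [X in _ * (_ * X)](eq_bigr (fun _ => -1)) => [|i si_neq_i]; last first.
  by rewrite entry eq_sym (negbTE si_neq_i) s_edges // mulr0n sub0r.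
rewrite !prodr_const.
have -> : #|[pred i | s i != i]| = j.*2.
  by rewrite -moved_j; apply: eq_card => i; rewrite !inE.
have -> : #|[pred i | s i == i]| = (n - j.*2)%N.
  apply/eqP; rewrite -(eqn_add2l j.*2) subnKC //; apply/eqP.
  rewrite -moved_j -[RHS](card_ord n) -(cardsC [set i | s i != i]).
  by congr (_ + _); apply: eq_card => i; rewrite !inE negbK.
by rewrite polyCM !polyC_exp polyCN polyC1 -mulrA [X in _ * X]mulrC.
Qed.

Lemma dvdp_Xn_adj_char_poly (R : idomainType) :
  'X^(n - (matching_number e).*2) %| char_poly (adj_mx R e).
Proof.
rewrite char_polyE; elim/big_ind: _ => [||s _]; [exact: dvdp0 | exact: dvdp_add |].
have [c [j [le_jb _ ->]]] := adj_char_poly_term R s.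
by apply/dvdp_mull/dvdp_exp2l; rewrite leq_sub2l // leq_double.
Qed.

Lemma adj_char_poly_hornerN (R : comNzRingType) t :
  (char_poly (adj_mx R e)).[- t] = (-1) ^+ n * (char_poly (adj_mx R e)).[t].
Proof.
rewrite char_polyE !horner_sum mulr_sumr; apply: eq_bigr => s _.
have [c [j [_ le_jn ->]]] := adj_char_poly_term R s.
rewrite !hornerE [(- t) ^+ _]exprNn -signr_odd oddB // odd_double addbF signr_odd.
by rewrite /= mulrCA mulrA.
Qed.

End AdjacencyCharPoly.

Lemma mxtrace_adj_sqr (R : nzRingType) n (e : rel 'I_n) : symmetric e ->
  \tr (adj_mx R e *m adj_mx R e) =
    (\sum_(i in [set: 'I_n]) #|[set u in [set: 'I_n] | e i u]|)%:R.
Proof.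
move=> e_sym; rewrite /mxtrace natr_sum; apply: eq_big => [i | i _]; first by rewrite inE.
rewrite mxE card_in_pred_sum natr_sum; apply: eq_big => [j | j _]; first by rewrite inE.
by rewrite !mxE (e_sym j i); case: (e i j); rewrite ?mulr1 ?mulr0.
Qed.

Section AdjacencySpectrum.

Variables (R : rcfType) (n : nat) (e : rel 'I_n) (s : seq R).
Hypotheses (e_sym : symmetric e) (e_irr : irreflexive e) (acyclic : ~ has_cycle e).
Hypothesis char_s : char_poly (adj_mx R e) = \prod_(x <- s) ('X - x%:P).

Lemma adj_eigen_count_neq0 :
  (count (fun x => x != 0)%R s <= (matching_number e).*2)%N.
Proof.
have char_neq0 : char_poly (adj_mx R e) != 0 by rewrite monic_neq0 ?char_poly_monic.
have := mup_geq 0 (n - (matching_number e).*2) char_neq0.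
rewrite subr0 dvdp_Xn_adj_char_poly // char_s mu_prod_XsubC => zeros.
rewrite -(leq_add2l (count_mem 0 s)) count_predC (size_char_poly_roots char_s).
by rewrite addnC -leq_subLR zeros.
Qed.

Lemma adj_eigen_perm_opp : perm_eq s (map -%R s).
Proof.
apply: prod_XsubC_eq; rewrite -char_s; apply: eq_poly_on_ge0 => t _.
rewrite -[t in LHS]opprK adj_char_poly_hornerN // char_s !horner_prod big_map.
rewrite -(size_char_poly_roots char_s) -prodrN_seq; apply: eq_bigr => x _.
by rewrite !hornerXsubC opprB !opprK addrC.
Qed.

Lemma adj_eigen_sum_sqr : (0 < n)%N -> \sum_(x <- s) x ^+ 2 <= ((n - 1).*2)%:R.
Proof.
move=> n_gt0; set sqr := fun x : R => x ^+ 2.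
have size_sqr : size (map sqr s) = n by rewrite size_map (size_char_poly_roots char_s).
have := coefPn_prod_XsubC (ps := map sqr s); rewrite size_sqr -lt0n => /(_ n_gt0).
rewrite -(char_poly_sqr_mx char_s) char_poly_trace // big_map => /oppr_inj <-.
have setT_neq0 : [set: 'I_n] != set0 by apply/set0Pn; exists (Ordinal n_gt0).
rewrite mxtrace_adj_sqr // ler_nat.
by have := acyclic_degree_sum e_sym e_irr acyclic setT_neq0; rewrite cardsT card_ord.
Qed.

Lemma adj_eigen_count_gt0 : (count (fun x => 0 < x)%R s <= matching_number e)%N.
Proof.
have := adj_eigen_count_neq0.
by rewrite count_neq0_split perm_eq_opp_count ?adj_eigen_perm_opp // addnn leq_double.
Qed.

Lemma adj_eigen_sum_sqr_gt0 : (0 < n)%N -> \sum_(x <- s | 0 < x) x ^+ 2 <= (n - 1)%:R.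
Proof.
move=> /adj_eigen_sum_sqr; rewrite sum_sqr_split perm_eq_opp_sum_sqr.
  by rewrite -addnn natrD; lra.
exact: adj_eigen_perm_opp.
Qed.

End AdjacencySpectrum.

Theorem corollary4p1 (R : realType) (n : nat) (e : rel 'I_n) (s : seq R)
  (k : nat) :
  is_tree e ->
  eigenvalues_desc (adj_mx R e) s ->
  (1 <= k <= n)%N ->
  Ssum s k <=
    (if (k <= matching_number e)%N then Num.sqrt ((k * (n - 1))%:R)
     else if (k <= n - matching_number e)%N
          then Num.sqrt ((matching_number e * (n - 1))%:R)
          else Num.sqrt (((n - k) * (n - 1))%:R)).
Proof.
move=> [n_gt0 [e_sym e_irr] _ acyclic] [_ char_s] /andP[_ le_kn].
have size_s := size_char_poly_roots char_s.
have sym_s := adj_eigen_perm_opp e_irr acyclic char_s.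
have sqr_pos := adj_eigen_sum_sqr_gt0 e_sym e_irr acyclic char_s n_gt0.
have le_k_size : (k <= size s)%N by rewrite size_s.
have le_pos := Ssum_le_pos le_k_size (adj_eigen_count_gt0 e_irr acyclic char_s) sqr_pos.
have sqr_neg : \sum_(x <- s | x < 0) x ^+ 2 <= (n - 1)%:R by rewrite perm_eq_opp_sum_sqr.
have := Ssum_le_neg le_k_size (perm_eq_opp_sum0 sym_s) sqr_neg; rewrite size_s => le_neg.
rewrite !natrM; case: leqP => [le_kb | lt_bk].
  by rewrite (minn_idPl le_kb) in le_pos.
by case: ifP => // _; rewrite (minn_idPr (ltnW lt_bk)) in le_pos.
Qed.
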